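(* For every integer $n\ge 0$, \[ \sum_{k=0}^{n}\Big(-\frac{1}{4}\Big)^k\binom{n}{k}\binom{1+2k}{k}H_{1+2k} =\frac{1}{2^{1+2n}(1+2n)}\binom{1+2n}{n}\Big\{\frac{8+8n}{1+2n}+3H_n-4H_{1+2n}\Big\}-\frac{1}{1+n}. \]
   Context: For an integer $m\ge 0$, $H_m$ denotes the $m$-th harmonic number: $H_0=0$ and $H_m=\sum_{j=1}^m \frac1j$ for $m\ge1$. $\binom{n}{k}$ is the usual binomial coefficient. *)

From HB Require Import structures.
From mathcomp Require Import all_boot all_order all_algebra.
Set Implicit Arguments. Unset Strict Implicit. Unset Printing Implicit Defensive.
Import Order.TTheory GRing.Theory Num.Theory.
Local Open Scope ring_scope.

Definition harmonic (m : nat) : rat := \sum_(1 <= j < m.+1) (j%:R)^-1.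

(* The summand t(n,k) = (-1/4)^k C(n,k) C(2k+1,k) satisfies a Zeilberger
   recurrence in n with certificate (2k+3) t(n,k), which telescopes in k.
   Summed against an arbitrary weight f(k), it relates the f-weighted sums at
   n+1 and n up to terms in f(k+1) - f(k).  For f = 1 this is a first-order
   recurrence solved by 2 P(n), P(n) = C(2n+1,n) / (2^(2n+1) (2n+1)).  For
   f(k) = H_(2k+1) the increments 1/(2k+2) + 1/(2k+3) bring in the unweighted
   sum and the sum D(n) of (-1/4)^k C(n+1,k+1) C(2k+1,k); by Pascal's rule
   D(n+1) - D(n) is the unweighted sum at n+1, so D has a closed form too, and
   the resulting inhomogeneous recurrence is solved by induction on n. *)
From HB Require Import structures.
From mathcomp Require Import all_boot all_order all_algebra.
From mathcomp Require Import ring lra zify.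
Import Order.TTheory GRing.Theory Num.Theory.
Local Open Scope ring_scope.

Lemma harmonic0 : harmonic 0 = 0.
Proof. by rewrite /harmonic big_geq. Qed.

Lemma harmonic1 : harmonic 1 = 1.
Proof. by rewrite /harmonic big_nat1 invr1. Qed.

Lemma harmonicS m : harmonic m.+1 = harmonic m + m.+1%:R^-1.
Proof. by rewrite /harmonic big_nat_recr. Qed.

Lemma harmonic_oddS k :
  harmonic (1 + 2 * k.+1)
  = harmonic (1 + 2 * k) + (2 * k%:R + 2)^-1 + (2 * k%:R + 3)^-1.
Proof.
rewrite (_ : (1 + 2 * k.+1 = (1 + 2 * k).+2)%N); last by lia.
by rewrite !harmonicS; congr (_ + _^-1 + _^-1); ring.
Qed.

Lemma mul_bin_odd_centralS k :
  ('C(1 + 2 * k.+1, k.+1) * k.+2 = 2 * (2 * k + 3) * 'C(1 + 2 * k, k))%N.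
Proof.
have -> : (1 + 2 * k.+1 = (2 * k + 2).+1)%N by lia.
have sym n m : (m <= n)%N -> 'C(n, m) = 'C(n, n - m) by move=> /bin_sub.
have top : 'C((2 * k + 2).+1, k.+2) = 'C((2 * k + 2).+1, k.+1).
  by rewrite sym; [congr 'C(_, _) |]; lia.
have pascal : 'C(2 * k + 2, k.+1) = (2 * 'C(1 + 2 * k, k))%N.
  rewrite (_ : (2 * k + 2 = (1 + 2 * k).+1)%N); last by lia.
  by rewrite binS [in 'C(_, k.+1)]sym; [rewrite (_ : (1 + 2 * k - k.+1 = k)%N) |]; lia.
have := mul_bin_diag (2 * k + 2).+1 k.+1; rewrite /= top pascal; lia.
Qed.

Lemma bin_odd_centralS (F : realFieldType) k :
  'C(1 + 2 * k.+1, k.+1)%:R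
  = 2 * (2 * k%:R + 3) * 'C(1 + 2 * k, k)%:R / (k%:R + 2) :> F.
Proof.
have := congr1 (GRing.natmul (1 : F)) (mul_bin_odd_centralS k).
rewrite !natrM => binS_odd.
apply: (mulIf (_ : k.+2%:R != 0)); first by rewrite pnatr_eq0.
by rewrite binS_odd; field; have := ler0n F k; lra.
Qed.

Lemma bin_ratio_left (R : pzRingType) n k :
  (k%:R + 1) * 'C(n, k.+1)%:R = (n%:R - k%:R) * 'C(n, k)%:R :> R.
Proof.
case: (ltnP k n) => [lt_kn | le_nk].
  have := congr1 (GRing.natmul (1 : R)) (mul_bin_left n k).
  by rewrite !natrM natrB ?(ltnW lt_kn) // -natr1 => ->.
rewrite (@bin_small n k.+1) ?ltnS // mulr0.
case: (ltngtP k n) le_nk => // [lt_nk _ | -> _]; last by rewrite subrr mul0r.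
by rewrite bin_small // mulr0.
Qed.

Lemma bin_ratio_diag (R : pzRingType) n k :
  (k%:R + 1) * 'C(n.+1, k.+1)%:R = (n%:R + 1) * 'C(n, k)%:R :> R.
Proof.
have := congr1 (GRing.natmul (1 : R)) (mul_bin_diag n.+1 k).
by rewrite !natrM -!natr1 => ->.
Qed.

Definition summand n k : rat :=
  (- (1 / 4)) ^+ k * 'C(n, k)%:R * 'C(1 + 2 * k, k)%:R.

Lemma summand_n0 n : summand n 0 = 1.
Proof. by rewrite /summand bin0 expr0 !mul1r. Qed.

Lemma summand_small n : summand n n.+1 = 0.
Proof. by rewrite /summand bin_small // mulr0 mul0r. Qed.

Lemma summand_zeilberger n k :
  2 * (n%:R + 2) * summand n.+1 k.+1 - (2 * n%:R + 1) * summand n k.+1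
  = (2 * k%:R + 5) * summand n k.+1 - (2 * k%:R + 3) * summand n k.
Proof.
have ratio_n : 'C(n, k.+1)%:R = (n%:R - k%:R) * 'C(n, k)%:R / (k%:R + 1) :> rat.
  by rewrite -bin_ratio_left; field; have := ler0n rat k; lra.
rewrite /summand binS natrD ratio_n bin_odd_centralS exprS.
by field; have := ler0n rat k; lra.
Qed.

Definition weighted_sum n (f : nat -> rat) : rat :=
  \sum_(0 <= k < n.+1) summand n k * f k.

Lemma weighted_sum_rec n f :
  2 * (n%:R + 2) * weighted_sum n.+1 f - (2 * n%:R + 1) * weighted_sum n f
  = 3 * f 0%N + \sum_(0 <= k < n.+1)
      ((2 * k%:R + 5) * summand n k.+1 - (2 * k%:R + 3) * summand n k) * f k.+1.
Proof.
have extend : weighted_sum n f = \sum_(0 <= k < n.+2) summand n k * f k.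
  by rewrite big_nat_recr //= summand_small mul0r addr0.
rewrite extend /weighted_sum !mulr_sumr -sumrB big_nat_recl // !summand_n0.
congr (_ + _); first ring.
by apply: eq_bigr => k _; rewrite -summand_zeilberger; ring.
Qed.

Definition central_weight n : rat :=
  (2 ^+ (1 + 2 * n) * (1 + 2 * n)%:R)^-1 * 'C(1 + 2 * n, n)%:R.

Lemma central_weight0 : central_weight 0 = 1 / 2.
Proof. by rewrite /central_weight /= bin0 expr1 mulr1 mul1r. Qed.

Lemma central_weightS n :
  central_weight n.+1 = (2 * n%:R + 1) * central_weight n / (2 * (n%:R + 2)).
Proof.
rewrite /central_weight bin_odd_centralS.
rewrite (_ : (1 + 2 * n.+1 = (1 + 2 * n) + 2)%N) ?exprD; last by lia.
by field; rewrite expf_neq0 //=; have := ler0n rat n; lra.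
Qed.

Notation unweighted_sum n := (weighted_sum n (fun=> 1)).

Lemma unweighted_sumS n :
  2 * (n%:R + 2) * unweighted_sum n.+1 = (2 * n%:R + 1) * unweighted_sum n.
Proof.
apply/eqP; rewrite -subr_eq0 weighted_sum_rec.
under eq_bigr => k _.
  rewrite mulr1 (_ : 2 * k%:R + 5 = 2 * k.+1%:R + 3); last by ring.
  over.
rewrite (telescope_sumr (fun k => (2 * k%:R + 3) * summand n k)) //=.
by rewrite summand_small summand_n0; apply/eqP; ring.
Qed.

Lemma unweighted_sum_closed n : unweighted_sum n = 2 * central_weight n.
Proof.
elim: n => [|n IH].
  by rewrite /weighted_sum big_nat1 summand_n0 central_weight0; field.
apply: (mulfI (_ : 2 * (n%:R + 2) != 0)); first by have := ler0n rat n; lra.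
by rewrite unweighted_sumS IH central_weightS; field; have := ler0n rat n; lra.
Qed.

Definition shifted_sum n : rat :=
  \sum_(0 <= k < n.+1) (- (1 / 4)) ^+ k * 'C(n.+1, k.+1)%:R * 'C(1 + 2 * k, k)%:R.

Lemma shifted_sumS n : shifted_sum n.+1 = shifted_sum n + unweighted_sum n.+1.
Proof.
rewrite /shifted_sum /weighted_sum.
under eq_bigr do rewrite binS natrD mulrDr mulrDl.
rewrite big_split /= big_nat_recr //= (@bin_small n.+1 n.+2) // mulr0 mul0r addr0.
by congr (_ + _); apply: eq_bigr => k _; rewrite mulr1.
Qed.

Lemma shifted_sum_closed n : shifted_sum n = 2 - (2 * n%:R + 1) * unweighted_sum n.
Proof.
elim: n => [|n IH].
  by rewrite /shifted_sum /weighted_sum !big_nat1 summand_n0 expr0 bin0 binn; ring.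
by rewrite shifted_sumS IH -unweighted_sumS; ring.
Qed.

Notation odd_harmonic_sum n := (weighted_sum n (fun k => harmonic (1 + 2 * k))).

(* (2k+3) t(n,k) (1/(2k+2) + 1/(2k+3)) = 2 t(n,k) + t(n,k)/(2k+2), and
   (k+1) C(n+1,k+1) = (n+1) C(n,k) turns t(n,k)/(2k+2) into a shifted term. *)
Lemma summand_odd_harmonic_step n k :
  ((2 * k%:R + 5) * summand n k.+1 - (2 * k%:R + 3) * summand n k)
    * harmonic (1 + 2 * k.+1)
  = (2 * k.+1%:R + 3) * summand n k.+1 * harmonic (1 + 2 * k.+1)
    - (2 * k%:R + 3) * summand n k * harmonic (1 + 2 * k)
    - (2 * summand n k + (- (1 / 4)) ^+ k * 'C(n.+1, k.+1)%:R
                           * 'C(1 + 2 * k, k)%:R / (2 * (n%:R + 1))).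
Proof.
have ratio : 'C(n.+1, k.+1)%:R = (n%:R + 1) * 'C(n, k)%:R / (k%:R + 1) :> rat.
  by rewrite -bin_ratio_diag; field; have := ler0n rat k; lra.
rewrite harmonic_oddS /summand ratio.
by field; have := ler0n rat k; have := ler0n rat n; lra.
Qed.

Lemma odd_harmonic_sumS n :
  2 * (n%:R + 2) * odd_harmonic_sum n.+1
  = (2 * n%:R + 1) * odd_harmonic_sum n - 2 * unweighted_sum n
    - shifted_sum n / (2 * (n%:R + 1)).
Proof.
rewrite -(subrK ((2 * n%:R + 1) * odd_harmonic_sum n) (_ * odd_harmonic_sum n.+1)).
rewrite weighted_sum_rec.
under eq_bigr do rewrite summand_odd_harmonic_step.
rewrite sumrB (telescope_sumr (fun k => (2 * k%:R + 3) * summand n k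
                                          * harmonic (1 + 2 * k))) //.
rewrite summand_small summand_n0 big_split /= -mulr_sumr -mulr_suml.
rewrite /weighted_sum /shifted_sum harmonic1.
under [X in _ - 2 * X]eq_bigr do rewrite mulr1.
ring.
Qed.

Lemma odd_harmonic_sum_closed n :
  odd_harmonic_sum n
  = central_weight n * ((8 + 8 * n)%:R / (1 + 2 * n)%:R + 3 * harmonic n
                        - 4 * harmonic (1 + 2 * n))
    - (1 + n)%:R^-1.
Proof.
elim: n => [|n IH].
  by rewrite /weighted_sum big_nat1 summand_n0 harmonic1 central_weight0 harmonic0; field.
apply: (mulfI (_ : 2 * (n%:R + 2) != 0)); first by have := ler0n rat n; lra.
rewrite odd_harmonic_sumS IH shifted_sum_closed unweighted_sum_closed.
rewrite central_weightS harmonicS harmonic_oddS.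
by field; have := ler0n rat n; lra.
Qed.

Theorem theorem10 (n : nat) :
  \sum_(0 <= k < n.+1)
     (- (1 / 4 : rat)) ^+ k * ('C(n, k))%:R * ('C(1 + 2 * k, k))%:R
       * harmonic (1 + 2 * k)
  = (2 ^+ (1 + 2 * n) * (1 + 2 * n)%:R)^-1 * ('C(1 + 2 * n, n))%:R
      * ((8 + 8 * n)%:R / (1 + 2 * n)%:R + 3 * harmonic n
         - 4 * harmonic (1 + 2 * n))
    - (1 + n)%:R^-1.
Proof. exact: odd_harmonic_sum_closed. Qed.
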